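(* Let $X$ be a $T_0$ topological space and $x,y\in X$. Then $x\ll_{\operatorname{Irr}} y$ if and only if for every net $(x_i)_{i\in I}$ in $X$ that $\operatorname{Irr}$-converges to $y$, there exists $k\in I$ such that $x_i\ge x$ for all $i\ge k$.
   Context: For a topological space $X$, a nonempty subset $E$ is irreducible if whenever $E\subseteq A_1\cup A_2$ with $A_1,A_2$ closed, $E\subseteq A_1$ or $E\subseteq A_2$. The specialisation order is $x\le y$ iff $x\in\operatorname{cl}(\{y\})$; $\uparrow x=\{z:z\ge x\}$; $\bigvee$ denotes supremum in this order. $\operatorname{Irr}^+(X)$ is the set of irreducible subsets whose supremum exists. $x\ll_{\operatorname{Irr}} y$ iff for every $E\in\operatorname{Irr}^+(X)$ with $\bigvee E\ge y$, $E\cap\uparrow x\ne\emptyset$. A net $(x_i)_{i\in I}$ is a map from a preorder $(I,\le)$ to $X$. A net $(x_i)_{i\in I}$ $\operatorname{Irr}$-converges to $y$ if there is $E\in\operatorname{Irr}^+(X)$ with $\bigvee E\ge y$ such that for each $e\in E$ there is $k(e)\in I$ with $x_i\ge e$ for all $i\ge k(e)$. *)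

From HB Require Import structures.
From mathcomp Require Import all_boot all_order.
From mathcomp Require Import all_classical topology.
Set Implicit Arguments. Unset Strict Implicit. Unset Printing Implicit Defensive.
Local Open Scope classical_set_scope.

Section IrrDefs.
Variable X : topologicalType.

Definition spec_le (x y : X) : Prop := closure [set y] x.

Definition irreducible (E : set X) : Prop :=
  E !=set0 /\
  forall A1 A2 : set X, closed A1 -> closed A2 ->
    E `<=` A1 `|` A2 -> E `<=` A1 \/ E `<=` A2.

Definition is_sup (E : set X) (s : X) : Prop :=
  (forall e, E e -> spec_le e s) /\
  (forall u, (forall e, E e -> spec_le e u) -> spec_le s u).

Definition irr_plus_above (E : set X) (y : X) : Prop :=
  irreducible E /\ exists s, is_sup E s /\ spec_le y s.

Definition way_below_irr (x y : X) : Prop :=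
  forall E : set X, irr_plus_above E y -> exists2 e, E e & spec_le x e.

Definition irr_converges (I : Type) (le : I -> I -> Prop) (net : I -> X) (y : X)
  : Prop :=
  exists E : set X, irr_plus_above E y /\
    forall e, E e -> exists k : I, forall i, le k i -> spec_le e (net i).

End IrrDefs.

From mathcomp Require Import all_boot all_order.
From mathcomp Require Import all_classical topology.
Set Implicit Arguments. Unset Strict Implicit.
Local Open Scope classical_set_scope.

(* Forward: an Irr-limit set E above y meets the upper set of x, and the net is
   eventually above that element. Backward: every E in Irr^+(X) with sup above y
   is itself a net, indexed by its own elements in the specialisation order,
   which Irr-converges to y witnessed by E; being eventually above x means some
   element of E is above x. *)

Section WayBelowIrr.
Variable X : topologicalType.
Implicit Types a b c x y : X.

Lemma spec_le_refl a : spec_le a a.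
Proof. exact: subset_closure. Qed.

Lemma spec_le_trans a b c : spec_le a b -> spec_le b c -> spec_le a c.
Proof.
move=> hab hbc.
have cl_b_sub : closure [set b] `<=` closure [set c].
  rewrite [X in _ `<=` X](closure_id _).1; last exact: closed_closure.
  by apply: closureS => z ->.
exact: cl_b_sub.
Qed.

Lemma way_below_irr_eventually_above x y (I : Type) (le : I -> I -> Prop)
    (net : I -> X) :
  way_below_irr x y -> irr_converges le net y ->
  exists k : I, forall i, le k i -> spec_le x (net i).
Proof.
move=> xy [E [EyE Eev]].
have [e Ee xe] := xy E EyE.
have [k ek] := Eev e Ee.
by exists k => i ki; apply: spec_le_trans xe (ek i ki).
Qed.

Definition elements_le (E : set X) (a b : {e : X | E e}) : Prop :=
  spec_le (sval a) (sval b).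

Lemma elements_le_refl (E : set X) (a : {e : X | E e}) : elements_le a a.
Proof. exact: spec_le_refl. Qed.

Lemma elements_le_trans (E : set X) (a b c : {e : X | E e}) :
  elements_le a b -> elements_le b c -> elements_le a c.
Proof. exact: spec_le_trans. Qed.

Lemma elements_net_irr_converges (E : set X) y :
  irr_plus_above E y -> irr_converges (@elements_le E) sval y.
Proof. by move=> EyE; exists E; split => // e Ee; exists (exist _ e Ee). Qed.

End WayBelowIrr.

Theorem proposition4p2 (X : topologicalType) (hT0 : kolmogorov_space X) (x y : X) :
  way_below_irr x y <->
  (forall (I : Type) (le : I -> I -> Prop),
      (forall i, le i i) -> (forall i j k, le i j -> le j k -> le i k) ->
      forall net : I -> X, irr_converges le net y ->
      exists k : I, forall i, le k i -> spec_le x (net i)).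
Proof.
split=> [xy I le _ _ net | ev E EyE].
  exact: way_below_irr_eventually_above.
have [[e Ee] ev_x] := ev _ _ (@elements_le_refl X E) (@elements_le_trans X E) _
  (elements_net_irr_converges EyE).
exists e; first exact: Ee.
exact: (ev_x (exist _ e Ee) (@spec_le_refl _ e)).
Qed.
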